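(* Let $f$ be a linear Anosov diffeomorphism of $\mathbb{T}^2$ induced by an integer matrix $L$ with $\det L=-1$ (orientation-reversing). Then for every linear involution $R$ of $\mathbb{T}^2$ (induced by an integer matrix $A$ with $\det A=\pm1$ and $R\circ R=\mathrm{Id}$), $f$ is not $R$-reversible, i.e. $R\circ f\neq f^{-1}\circ R$.
   Context: $\mathbb{T}^2=\mathbb{R}^2/\mathbb{Z}^2$. A diffeomorphism of $\mathbb{T}^2$ induced by an integer matrix $M$ with $\det M=\pm1$ is the map $\pi(v)\mapsto\pi(Mv)$, $\pi$ the projection. A linear Anosov diffeomorphism is one induced by such a matrix with no eigenvalue of modulus one. $f$ is $R$-reversible if $R\circ f=f^{-1}\circ R$. *)

From HB Require Import structures.
From mathcomp Require Import all_boot all_order all_algebra all_field.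
From mathcomp Require Import reals Rstruct.
Set Implicit Arguments. Unset Strict Implicit. Unset Printing Implicit Defensive.
Import Order.TTheory GRing.Theory Num.Theory.
Local Open Scope ring_scope.

Definition RR : realType := Rdefinitions.R.

(* Points of T^2 = R^2/Z^2, represented by their unique representative in [0,1)^2. *)
Definition in_unit_square (v : 'cV[RR]_2) : bool :=
  [forall i, (0 <= v i 0) && (v i 0 < 1)].
Definition torus := {v : 'cV[RR]_2 | in_unit_square v}.

Definition frac_vec (v : 'cV[RR]_2) : 'cV[RR]_2 :=
  \col_i (v i 0 - (Num.floor (v i 0))%:~R).

Lemma frac_vec_in (v : 'cV[RR]_2) : in_unit_square (frac_vec v).
Proof.
rewrite /in_unit_square; apply/forallP => i; rewrite !mxE.
have /andP[h1 h2] := real_floor_itv (num_real (v i 0)).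
rewrite intrD in h2.
apply/andP; split; first by rewrite subr_ge0.
by rewrite ltrBlDr addrC.
Qed.

Definition pi (v : 'cV[RR]_2) : torus := exist _ (frac_vec v) (frac_vec_in v).

Definition induced (M : 'M[int]_2) : torus -> torus :=
  fun p => pi (map_mx intr M *m val p).

Definition unimodular (M : 'M[int]_2) : Prop := \det M = 1 \/ \det M = -1.

Definition linear_anosov_matrix (L : 'M[int]_2) : Prop :=
  unimodular L /\
  forall lam : algC, eigenvalue (map_mx intr L) lam -> `|lam| != 1.

(** Integer matrices act faithfully on the torus, so [R f = f^-1 R] with
    [R^2 = id] lifts to the matrix identities [A^2 = 1] and [L A L = A], whence
    [(L A)^2 = 1].  An involution of determinant 1 in GL_2(Z) is [1] or [-1];
    since [det L = -1], one of [A] and [L A] has determinant 1, which gives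
    [L = ±1] or [L = ±A], and in every case [L^2 = 1].  An involution of
    determinant [-1] has trace 0, hence characteristic polynomial [X^2 - 1]
    and the eigenvalue 1, which an Anosov matrix cannot have. *)
From Pilot Require Import Defs.
From HB Require Import structures.
From mathcomp Require Import all_boot all_order all_algebra all_field.
From mathcomp Require Import reals Rstruct.
From mathcomp Require Import zify ring lra.
Import Order.TTheory GRing.Theory Num.Theory.
Local Open Scope ring_scope.

Lemma frac_vec_sub_int (v : 'cV[RR]_2) (z : 'cV[int]_2) :
  frac_vec (v - map_mx intr z) = frac_vec v.
Proof.
apply/matrixP => i j; rewrite (ord1 j) !mxE.
rewrite floorDrz ?rpredN ?intr_int // -rmorphN /= intrKfloor rmorphD /= rmorphN /=.
by ring.
Qed.

(* [Defs.pi] must be qualified: [generic_quotient] exports its own [pi]. *)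
Lemma induced_pi (M : 'M[int]_2) (v : 'cV[RR]_2) :
  induced M (Defs.pi v) = Defs.pi (map_mx intr M *m v).
Proof.
rewrite /induced /=.
have -> : frac_vec v = v - map_mx intr (\col_i Num.floor (v i 0)).
  by apply/matrixP => i j; rewrite (ord1 j) !mxE.
by rewrite mulmxBr -map_mxM; apply: val_inj; exact: frac_vec_sub_int.
Qed.

Lemma pi_val (p : torus) : Defs.pi (val p) = p.
Proof.
apply: val_inj; case: p => v /= /forallP hv.
apply/matrixP => i j; rewrite (ord1 j) !mxE.
have /andP[h0 h1] := hv i.
suff -> : Num.floor (v i 0) = 0 by rewrite subr0.
by apply: floor_def; rewrite h0 /= add0r.
Qed.

Lemma inducedM (M N : 'M[int]_2) : induced M \o induced N =1 induced (M * N).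
Proof. by move=> p; rewrite /= {2}/induced induced_pi /induced mulmxA -map_mxM. Qed.

Lemma induced1 : induced 1 =1 id.
Proof. by move=> p; rewrite /induced map_mx1 mul1mx pi_val. Qed.

Lemma int_eq_mul_sqr_add1 (d k : int) : d = k * (d * d + 1) -> d = 0.
Proof.
have [->|k_ne0 e] := eqVneq k 0; first by rewrite mul0r.
have e2 : d * d = k * k * ((d * d + 1) * (d * d + 1)) by rewrite {1 2}e; ring.
nia.
Qed.

(* With [t = 1 / ((m - n)^2 + 1)], equal fractional parts make [(m - n) t] an
   integer [k], i.e. [m - n = k ((m - n)^2 + 1)]. *)
Lemma frac_scale_inj (m n : int) (t : RR) :
  t = ((m - n) * (m - n) + 1)%:~R^-1 ->
  m%:~R * t - (Num.floor (m%:~R * t))%:~R = n%:~R * t - (Num.floor (n%:~R * t))%:~R ->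
  m = n.
Proof.
move=> -> h; apply/eqP; rewrite -subr_eq0; apply/eqP.
set D := (m - n) * (m - n) + 1.
have D0 : (D%:~R : RR) != 0.
  by rewrite intr_eq0 gt_eqF // /D ltr_wpDl ?ltr01 // -expr2 sqr_ge0.
set a := Num.floor _ in h; set b := Num.floor _ in h.
have frac_int : (m - n)%:~R * (D%:~R)^-1 = (a - b)%:~R :> RR.
  rewrite !rmorphB /= mulrBl; move: h; set x := _ * _; set y := _ * _; lra.
apply: (@int_eq_mul_sqr_add1 _ (a - b)); apply: (@intr_inj RR).
by rewrite rmorphM /= -frac_int -mulrA mulVf // mulr1.
Qed.

Lemma induced_inj (M N : 'M[int]_2) : induced M =1 induced N -> M = N.
Proof.
move=> eqMN; apply/matrixP => i j.
set t : RR := ((M i j - N i j) * (M i j - N i j) + 1)%:~R^-1.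
move: (eqMN (Defs.pi (t *: delta_mx j 0))); rewrite !induced_pi.
move/(congr1 val)/matrixP/(_ i 0); rewrite -!scalemxAr -!colE !mxE.
by rewrite !(mulrC _ (_%:~R)); exact: frac_scale_inj.
Qed.

Lemma det_mx2 (R : comNzRingType) (B : 'M[R]_2) :
  \det B = B 0 0 * B 1 1 - B 0 1 * B 1 0.
Proof.
rewrite (expand_det_row _ 0) !big_ord_recl big_ord0 /cofactor !det_mx11 !mxE /=.
set g := fun i j : nat => B (inord i) (inord j).
have hg x y : B x y = g x y by rewrite /g !inord_val.
by rewrite !hg /bump /= expr0 expr1; ring.
Qed.

Lemma mx2_eq (R : Type) (A B : 'M[R]_2) :
  A 0 0 = B 0 0 -> A 0 1 = B 0 1 -> A 1 0 = B 1 0 -> A 1 1 = B 1 1 -> A = B.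
Proof.
move=> h00 h01 h10 h11; apply/matrixP => i j.
have ord2 (k : 'I_2) : k = 0 \/ k = 1.
  by case: k => [[|[|//]]] p; [left|right]; apply/val_inj.
by case: (ord2 i) => ->; case: (ord2 j) => ->.
Qed.

Lemma mulmx2E (R : nzRingType) (A B : 'M[R]_2) i j :
  (A * B) i j = A i 0 * B 0 j + A i 1 * B 1 j.
Proof.
rewrite !mxE !big_ord_recl big_ord0 addr0.
by rewrite (_ : lift ord0 (ord0 : 'I_1) = 1 :> 'I_2) //; apply/val_inj.
Qed.

Lemma involutive_det1_mx2 {B : 'M[int]_2} :
  B * B = 1 -> \det B = 1 -> B = 1 \/ B = -1.
Proof.
move=> BB; rewrite det_mx2.
have e i j := congr1 (fun M : 'M[int]_2 => M i j) BB.
move: (e 0 0) (e 0 1) (e 1 0) (e 1 1); rewrite /= !mulmx2E !mxE /=.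
set a := B 0 0; set b := B 0 1; set c := B 1 0; set d := B 1 1.
move=> e00 e01 e10 e11 det1.
have tr_ne0 : a + d != 0.
  apply/eqP => tr0; have : a * (a + d) = 2 by rewrite mulrDr; lia.
  by rewrite tr0 mulr0.
have b0 : b = 0.
  by apply/eqP; move: e01; rewrite (mulrC a) -mulrDr => /eqP; rewrite mulf_eq0 (negbTE tr_ne0) orbF.
have c0 : c = 0.
  by apply/eqP; move: e10; rewrite (mulrC d) -mulrDr => /eqP; rewrite mulf_eq0 (negbTE tr_ne0) orbF.
have [a1|aN1] : a = 1 \/ a = -1 by nia.
- by left; apply: mx2_eq; rewrite !mxE /= -/a -/b -/c -/d; lia.
- by right; apply: mx2_eq; rewrite !mxE /= -/a -/b -/c -/d; lia.
Qed.

(* [det (B - 1) = det B - tr B + 1], and [B^2 = 1] with [det B = -1] forces [tr B = 0]. *)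
Lemma involutive_detN1_eigenvalue1 (F : fieldType) {B : 'M[int]_2} :
  B * B = 1 -> \det B = -1 -> eigenvalue (map_mx intr B : 'M[F]_2) 1.
Proof.
move=> BB; rewrite det_mx2.
have e i j := congr1 (fun M : 'M[int]_2 => M i j) BB.
move: (e 0 0) (e 1 1); rewrite /= !mulmx2E !mxE /=.
set p := B 0 0; set q := B 0 1; set r := B 1 0; set s := B 1 1.
move=> e00 e11 detN1.
have tr0 : p + s = 0.
  apply/eqP; rewrite -[_ == 0]orbb -mulf_eq0; apply/eqP.
  have -> : (p + s) * (p + s) = (p * p + q * r) + (r * q + s * s) + 2 * (p * s - q * r)
    by ring.
  by rewrite e00 e11 detN1.
have detB1 : (p - 1) * (s - 1) - q * r = 0.
  have -> : (p - 1) * (s - 1) - q * r = (p * s - q * r) - (p + s) + 1 by ring.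
  by rewrite detN1 tr0.
have : \det (map_mx intr B - 1%:M : 'M[F]_2) == 0.
  rewrite det_mx2 !mxE /= -/p -/q -/r -/s !subr0.
  by rewrite -[X in _ == X](rmorph0 (intr : int -> F)) -detB1 !(rmorphB, rmorphM, rmorph1).
case/det0P => v v_ne0 hv; apply/eigenvalueP; exists v => //.
by move/eqP: hv; rewrite mulmxBr mulmx1 subr_eq0 scale1r => /eqP.
Qed.

Lemma reversible_detN1_involutive {L A : 'M[int]_2} :
  unimodular A -> \det L = -1 -> A * A = 1 -> L * A * L = A -> L * L = 1.
Proof.
move=> [detA|detA] detL AA LAL.
- case: (involutive_det1_mx2 AA detA) => A_eq; move: LAL; rewrite A_eq.
  + by rewrite mulr1.
  + by rewrite mulrN1 mulNr => /oppr_inj.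
- have LA2 : (L * A) * (L * A) = 1 by rewrite mulrA LAL AA.
  have detLA : \det (L * A) = 1 by rewrite detM detL detA mulrNN mulr1.
  have L_AA : L = L * A * A by rewrite -mulrA AA mulr1.
  case: (involutive_det1_mx2 LA2 detLA) => LA_eq; rewrite L_AA LA_eq.
  + by rewrite mul1r.
  + by rewrite mulN1r mulrNN.
Qed.

Theorem mainTheorem4 (L : 'M[int]_2) :
  linear_anosov_matrix L -> \det L = -1 ->
  forall A : 'M[int]_2, unimodular A ->
    induced A \o induced A = id ->
    forall finv : torus -> torus,
      cancel (induced L) finv -> cancel finv (induced L) ->
      induced A \o induced L <> finv \o induced A.
Proof.
move=> [_ no_unit_eig] detL A unimodA AA finv _ finvL rev.
have AA1 : A * A = 1.
  by apply: induced_inj => p; rewrite -inducedM induced1 AA.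
have LAL : L * A * L = A.
  apply: induced_inj => p; rewrite -inducedM /= -inducedM /=.
  by have /= -> := congr1 (fun f => f p) rev; rewrite finvL.
have LL := reversible_detN1_involutive unimodA detL AA1 LAL.
have := no_unit_eig 1 (involutive_detN1_eigenvalue1 algC LL detL).
by rewrite normr1 eqxx.
Qed.
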